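(* Let $(M,d)$ be a bounded metric space with metric normal structure such that $\mathcal A(M)$ is compact, and let $T:M\to M$ be orbit-nonexpansive. Then $T$ has a fixed point, and the fixed point set $\mathrm{Fix}(T)$ is a one-local retract of $M$.
   Context: For a metric space $(M,d)$, a mapping $T:M\to M$ and $x\in M$, the orbit of $x$ is $o_T(x)=\{x\}\cup\{T^nx:n\in\mathbb N\}$. For $x\in M$ and bounded $A\subseteq M$, $D(x,A)=\sup\{d(x,a):a\in A\}$ and $\delta(A)=\sup\{d(x,y):x,y\in A\}$. A mapping $T:M\to M$ is orbit-nonexpansive if $d(Tx,Ty)\le D(x,o_T(y))$ for all $x,y\in M$. A subset of $M$ is admissible if it is an intersection of closed balls of $M$; $\mathcal A(M)$ denotes the family of admissible sets. $\mathcal A(M)$ is compact if every subfamily of $\mathcal A(M)$ all of whose finite intersections are nonempty has nonempty intersection. $(M,d)$ has metric normal structure if for every admissible set $A$ with more than one point there exists $z_A\in A$ with $D(z_A,A)<\delta(A)$. A subset $E\subseteq M$ is a one-local retract of $M$ if for every family of closed balls with centers in $E$ having nonempty intersection, that intersection meets $E$. *)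

From Stdlib Require Import Reals List.
From Coquelicot Require Import Coquelicot.
Open Scope R_scope.

Definition is_metric {M : Type} (d : M -> M -> R) : Prop :=
  (forall x y, 0 <= d x y) /\
  (forall x y, d x y = 0 <-> x = y) /\
  (forall x y, d x y = d y x) /\
  (forall x y z, d x z <= d x y + d y z).

Definition bounded_metric {M : Type} (d : M -> M -> R) : Prop :=
  exists B : R, forall x y, d x y <= B.

(* supremum of a set of reals (meaningful for nonempty bounded sets) *)
Definition sup_R (E : R -> Prop) : R := real (Lub_Rbar E).

Definition Dist {M : Type} (d : M -> M -> R) (x : M) (A : M -> Prop) : R :=
  sup_R (fun t => exists a, A a /\ t = d x a).

Definition diam {M : Type} (d : M -> M -> R) (A : M -> Prop) : R :=
  sup_R (fun t => exists x y, A x /\ A y /\ t = d x y).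

Definition orbit {M : Type} (T : M -> M) (x : M) : M -> Prop :=
  fun z => z = x \/ exists n : nat, z = Nat.iter n T x.

Definition orbit_nonexpansive {M : Type} (d : M -> M -> R) (T : M -> M) : Prop :=
  forall x y, d (T x) (T y) <= Dist d x (orbit T y).

Definition cball {M : Type} (d : M -> M -> R) (c : M) (r : R) : M -> Prop :=
  fun x => d x c <= r.

(* intersection of a family of closed balls, the family being given as a
   set F of (center, radius) pairs *)
Definition ball_inter {M : Type} (d : M -> M -> R) (F : M -> R -> Prop) : M -> Prop :=
  fun x => forall c r, F c r -> cball d c r x.

Definition admissible {M : Type} (d : M -> M -> R) (A : M -> Prop) : Prop :=
  exists F : M -> R -> Prop, forall x, A x <-> ball_inter d F x.

Definition admissible_compact {M : Type} (d : M -> M -> R) : Prop :=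
  forall Fam : (M -> Prop) -> Prop,
    (forall A, Fam A -> admissible d A) ->
    (forall l : list (M -> Prop),
        (forall A, In A l -> Fam A) -> exists x, forall A, In A l -> A x) ->
    exists x, forall A, Fam A -> A x.

Definition metric_normal_structure {M : Type} (d : M -> M -> R) : Prop :=
  forall A : M -> Prop, admissible d A ->
    (exists x y, A x /\ A y /\ x <> y) ->
    exists z, A z /\ Dist d z A < diam d A.

Definition Fix {M : Type} (T : M -> M) : M -> Prop := fun x => T x = x.

Definition one_local_retract {M : Type} (d : M -> M -> R) (E : M -> Prop) : Prop :=
  forall F : M -> R -> Prop,
    (forall c r, F c r -> E c) ->
    (exists x, ball_inter d F x) ->
    exists x, E x /\ ball_inter d F x.

From Stdlib Require Import Reals List Classical Lra.
From Coquelicot Require Import Coquelicot.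
From mathcomp Require Import classical_sets.
Open Scope R_scope.
Local Open Scope classical_set_scope.
Set Bullet Behavior "Strict Subproofs".

(* Zorn's lemma gives a minimal nonempty admissible T-invariant subset K of
   any such set.  For x in K the ball B(Tx, D(x,K)) contains T(K), so its
   trace on K is again invariant and minimality gives d(Tx, y) <= D(x,K) on K.
   Hence, for z in K, the points of K lying within D(z,K) of all of K form an
   invariant admissible subset, which must be K itself: delta(K) <= D(z,K).
   Normal structure then forces K to be a single point, fixed by T.  Both
   claims follow by applying this to M and to intersections of balls centred
   at fixed points, which are invariant because d(Tx, c) <= D(x, {c}) when
   Tc = c. *)

Lemma sup_R_ub (E : R -> Prop) (B t : R) :
  (forall u, E u -> u <= B) -> E t -> t <= sup_R E.
Proof.
  intros HB Et. unfold sup_R.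
  destruct (Lub_Rbar_correct E) as [Hub Hlub].
  destruct (Lub_Rbar E) as [r| |]; simpl.
  - exact (Hub t Et).
  - exfalso. exact (Hlub (Finite B) HB).
  - exfalso. exact (Hub t Et).
Qed.

Lemma sup_R_le (E : R -> Prop) (b : R) :
  (exists t, E t) -> (forall u, E u -> u <= b) -> sup_R E <= b.
Proof.
  intros [t Et] Hb. unfold sup_R.
  destruct (Lub_Rbar_correct E) as [Hub Hlub].
  destruct (Lub_Rbar E) as [r| |]; simpl.
  - exact (Hlub (Finite b) Hb).
  - exfalso. exact (Hlub (Finite b) Hb).
  - exfalso. exact (Hub t Et).
Qed.

Lemma minimal_set_exists (M : Type) (Q : set (set M)) (A : set M) :
  Q A ->
  (forall C : set (set M), C `<=` Q -> total_on C subset -> C !=set0 ->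
     Q (fun x => forall K, C K -> K x)) ->
  exists K, Q K /\ forall K', Q K' -> K' `<=` K -> K `<=` K'.
Proof.
  intros QA Qchain.
  (* Zorn is applied to the complements relative to A, so that the empty
     chain corresponds to A itself. *)
  destruct (@Zorn_bigcup M (fun X => Q (fun x => A x /\ ~ X x)))
    as [X [QX Xmax]].
  - intros F FQ Ftot.
    destruct (classic (F !=set0)) as [[X0 FX0] | Fempty].
    + set (C := fun K => exists2 X, F X & K = (fun x => A x /\ ~ X x)).
      replace (fun x => A x /\ ~ (\bigcup_(X in F) X) x)
        with (fun x => forall K, C K -> K x).
      * apply Qchain.
        -- intros K [Y FY ->]. exact (FQ Y FY).
        -- intros K1 K2 [Y1 FY1 ->] [Y2 FY2 ->].
           destruct (Ftot Y1 Y2 FY1 FY2) as [S | S]; [right | left];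
             intros x [Ax nYx]; split; auto.
        -- exists (fun x => A x /\ ~ X0 x), X0; auto.
      * apply seteqP. split.
        -- intros x Hx. split.
           ++ refine (proj1 (Hx (fun x => A x /\ ~ X0 x) _)). exists X0; auto.
           ++ intros [Y FY Yx].
              refine (proj2 (Hx (fun x => A x /\ ~ Y x) _) Yx). exists Y; auto.
        -- intros x [Ax nUx] K [Y FY ->]. split; auto.
           intro Yx. apply nUx. exists Y; auto.
    + replace (fun x => A x /\ ~ (\bigcup_(X in F) X) x) with A; [exact QA |].
      apply seteqP. split.
      * intros x Ax. split; auto. intros [Y FY _]. apply Fempty. exists Y; auto.
      * intros x [Ax _]. exact Ax.
  - exists (fun x => A x /\ ~ X x). split; [exact QX |].
    intros K' QK' K'sub x [Ax nXx].
    apply NNPP. intro nK'x.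
    apply (Xmax (fun y => X y \/ ~ K' y)).
    + split.
      * intros y Xy. left. exact Xy.
      * intros Hsub. exact (nXx (Hsub x (or_intror nK'x))).
    + replace (fun y => A y /\ ~ (X y \/ ~ K' y)) with K'; [exact QK' |].
      apply seteqP. split.
      * intros y K'y. destruct (K'sub y K'y) as [Ay nXy]. split; [exact Ay |].
        intros [Xy | nK'y]; auto.
      * intros y [Ay HY]. apply NNPP. intro nK'y. exact (HY (or_intror nK'y)).
Qed.

Lemma nested_list_least (M : Type) (C : set (set M)) :
  C !=set0 -> total_on C subset ->
  forall l, (forall K, In K l -> C K) ->
  exists2 K0, C K0 & forall K, In K l -> K0 `<=` K.
Proof.
  intros [K1 CK1] Ctot l. induction l as [| K l IH]; intros Hl.
  - exists K1; [exact CK1 | intros K []].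
  - destruct IH as [K0 CK0 HK0]; [intros K' HK'; apply Hl; right; exact HK' |].
    assert (CK : C K) by (apply Hl; left; reflexivity).
    destruct (Ctot K0 K CK0 CK) as [S | S].
    + exists K0; [exact CK0 |].
      intros K' [<- | HK']; [exact S | exact (HK0 K' HK')].
    + exists K; [exact CK |].
      intros K' [<- | HK'] x Kx; [exact Kx | exact (HK0 K' HK' x (S x Kx))].
Qed.

Lemma orbit_fixed (M : Type) (T : M -> M) (c : M) :
  T c = c -> orbit T c `<=` [set c].
Proof.
  intros Tc w [-> | [n ->]]; [reflexivity |].
  induction n as [| n IH]; simpl; [reflexivity |]. rewrite IH. exact Tc.
Qed.

Lemma orbit_subset (M : Type) (T : M -> M) (K : set M) (y : M) :
  (forall x, K x -> K (T x)) -> K y -> orbit T y `<=` K.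
Proof.
  intros TK Ky w [-> | [n ->]]; [exact Ky |].
  induction n as [| n IH]; simpl; auto.
Qed.

Section Distances.

Variables (M : Type) (d : M -> M -> R).

Lemma Dist_ge (B : R) (x : M) (A : set M) (a : M) :
  (forall x y, d x y <= B) -> A a -> d x a <= Dist d x A.
Proof.
  intros d_le_B Aa. apply (sup_R_ub _ B).
  - intros u [a' [_ ->]]. apply d_le_B.
  - exists a; auto.
Qed.

Lemma Dist_le (x : M) (A : set M) (b : R) :
  A !=set0 -> (forall a, A a -> d x a <= b) -> Dist d x A <= b.
Proof.
  intros [a Aa] Hb. apply sup_R_le.
  - exists (d x a), a; auto.
  - intros u [a' [Aa' ->]]. auto.
Qed.

Lemma Dist_subset (B : R) (x : M) (A A' : set M) :
  (forall x y, d x y <= B) -> A !=set0 -> A `<=` A' -> Dist d x A <= Dist d x A'.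
Proof.
  intros d_le_B A0 AA'. apply Dist_le; [exact A0 |].
  intros a Aa. apply (Dist_ge B); auto.
Qed.

Lemma diam_le (A : set M) (b : R) :
  A !=set0 -> (forall x y, A x -> A y -> d x y <= b) -> diam d A <= b.
Proof.
  intros [a Aa] Hb. apply sup_R_le.
  - exists (d a a), a, a; auto.
  - intros u [x [y [Ax [Ay ->]]]]. auto.
Qed.

Lemma admissible_setT : admissible d setT.
Proof.
  exists (fun _ _ => False). intros x. split; [intros _ c r [] | intros _; exact I].
Qed.

Lemma admissible_ball_inter (F : M -> R -> Prop) : admissible d (ball_inter d F).
Proof. exists F. intros x. reflexivity. Qed.

Lemma admissible_setI_ball_inter (K : set M) (G : M -> R -> Prop) :
  admissible d K -> admissible d (K `&` ball_inter d G).
Proof.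
  intros [F HF]. exists (fun c r => F c r \/ G c r). intros x. split.
  - intros [Kx Gx] c r [Fc | Gc]; [exact (proj1 (HF x) Kx c r Fc) | exact (Gx c r Gc)].
  - intros Hx. split.
    + apply HF. intros c r Fc. apply Hx. left. exact Fc.
    + intros c r Gc. apply Hx. right. exact Gc.
Qed.

Lemma admissible_bigcap (Fam : set (set M)) :
  Fam `<=` admissible d -> admissible d (fun x => forall K, Fam K -> K x).
Proof.
  intros Fadm.
  exists (fun c r => exists K G, Fam K /\ (forall x, K x <-> ball_inter d G x) /\ G c r).
  intros x. split.
  - intros Hx c r [K [G [FK [HG Gc]]]]. exact (proj1 (HG x) (Hx K FK) c r Gc).
  - intros Hx K FK. destruct (Fadm K FK) as [G HG]. apply HG.
    intros c r Gc. apply Hx. exists K, G. auto.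
Qed.

End Distances.

Section FixedPoint.

Variables (M : Type) (d : M -> M -> R) (T : M -> M) (B : R).
Hypothesis d_sym : forall x y, d x y = d y x.
Hypothesis d_le_B : forall x y, d x y <= B.
Hypothesis normal : metric_normal_structure d.
Hypothesis compact : admissible_compact d.
Hypothesis T_orbit_nonexpansive : orbit_nonexpansive d T.

Definition invariant_admissible (K : set M) : Prop :=
  K !=set0 /\ admissible d K /\ forall x, K x -> K (T x).

Definition minimal_invariant (K : set M) : Prop :=
  invariant_admissible K /\
  forall K', invariant_admissible K' -> K' `<=` K -> K `<=` K'.

Lemma minimal_invariant_exists (A : set M) :
  invariant_admissible A -> exists K, minimal_invariant K /\ K `<=` A.
Proof.
  intros HA.
  destruct (minimal_set_exists M (fun K => invariant_admissible K /\ K `<=` A) A)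
    as [K [[HK KA] Kmin]].
  - split; [exact HA | intros x Ax; exact Ax].
  - intros C CQ Ctot [K0 CK0]. split; [split; [| split] |].
    + destruct (compact C) as [x Hx].
      * intros K CK. exact (proj1 (proj2 (proj1 (CQ K CK)))).
      * intros l Hl.
        destruct (nested_list_least M C (ex_intro _ K0 CK0) Ctot l Hl) as [K1 CK1 HK1].
        destruct (proj1 (proj1 (CQ K1 CK1))) as [x K1x].
        exists x. intros K HK. exact (HK1 K HK x K1x).
      * exists x. exact Hx.
    + apply admissible_bigcap. intros K CK. exact (proj1 (proj2 (proj1 (CQ K CK)))).
    + intros x Hx K CK. exact (proj2 (proj2 (proj1 (CQ K CK))) x (Hx K CK)).
    + intros x Hx. exact (proj2 (CQ K0 CK0) x (Hx K0 CK0)).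
  - exists K. split; [split; [exact HK |] | exact KA].
    intros K' HK' K'K. apply Kmin; [split; [exact HK' |] | exact K'K].
    intros x K'x. exact (KA x (K'K x K'x)).
Qed.

Lemma T_dist_le_Dist (K : set M) (x y : M) :
  (forall z, K z -> K (T z)) -> K y -> d (T x) (T y) <= Dist d x K.
Proof.
  intros TK Ky. eapply Rle_trans; [apply T_orbit_nonexpansive |].
  apply (Dist_subset M d B); auto.
  - exists y. left. reflexivity.
  - exact (orbit_subset M T K y TK Ky).
Qed.

Lemma minimal_invariant_in_ball_inter (K : set M) (G : M -> R -> Prop) :
  minimal_invariant K ->
  (K `&` ball_inter d G) !=set0 ->
  (forall x, K x -> ball_inter d G x -> ball_inter d G (T x)) ->
  K `<=` ball_inter d G.
Proof.
  intros [[_ [Kadm TK]] Kmin] KG0 TG x Kx.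
  refine (proj2 (Kmin (K `&` ball_inter d G) _ _ x Kx)).
  - split; [exact KG0 | split].
    + apply admissible_setI_ball_inter. exact Kadm.
    + intros z [Kz Gz]. split; [exact (TK z Kz) | exact (TG z Kz Gz)].
  - intros z [Kz _]. exact Kz.
Qed.

Lemma minimal_invariant_T_dist_le (K : set M) (x y : M) :
  minimal_invariant K -> K x -> K y -> d (T x) y <= Dist d x K.
Proof.
  intros Kmin Kx Ky.
  pose proof Kmin as [[_ [_ TK]] _].
  assert (TK_ball : forall z, K z -> d (T z) (T x) <= Dist d x K).
  { intros z Kz. rewrite d_sym. apply T_dist_le_Dist; assumption. }
  rewrite d_sym.
  apply (minimal_invariant_in_ball_inter K
           (fun c r => c = T x /\ r = Dist d x K) Kmin); [| | exact Ky |].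
  - exists (T x). split; [exact (TK x Kx) |].
    intros c r [-> ->]. exact (TK_ball x Kx).
  - intros z Kz _ c r [-> ->]. exact (TK_ball z Kz).
  - split; reflexivity.
Qed.

Lemma minimal_invariant_diam_le (K : set M) (z : M) :
  minimal_invariant K -> K z -> diam d K <= Dist d z K.
Proof.
  intros Kmin Kz.
  set (G := fun c r => K c /\ r = Dist d z K).
  assert (KG : K `<=` ball_inter d G).
  { apply (minimal_invariant_in_ball_inter K G Kmin).
    - exists z. split; [exact Kz |].
      intros c r [Kc ->]. apply (Dist_ge M d B); assumption.
    - intros u Ku Gu c r [Kc ->].
      eapply Rle_trans; [exact (minimal_invariant_T_dist_le K u c Kmin Ku Kc) |].
      apply Dist_le; [exists z; exact Kz |].
      intros a Ka. exact (Gu a _ (conj Ka eq_refl)). }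
  apply diam_le; [exists z; exact Kz |].
  intros x y Kx Ky. exact (KG x Kx y _ (conj Ky eq_refl)).
Qed.

Lemma minimal_invariant_singleton (K : set M) (x y : M) :
  minimal_invariant K -> K x -> K y -> x = y.
Proof.
  intros Kmin Kx Ky. apply NNPP. intros xy.
  destruct (normal K (proj1 (proj2 (proj1 Kmin)))) as [z [Kz Hz]].
  { exists x, y. auto. }
  pose proof (minimal_invariant_diam_le K z Kmin Kz). lra.
Qed.

Lemma invariant_admissible_fixed_point (A : set M) :
  invariant_admissible A -> exists2 x, A x & T x = x.
Proof.
  intros HA.
  destruct (minimal_invariant_exists A HA) as [K [Kmin KA]].
  pose proof Kmin as [[[x Kx] [_ TK]] _].
  exists x; [exact (KA x Kx) |].
  exact (minimal_invariant_singleton K _ _ Kmin (TK x Kx) Kx).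
Qed.

Lemma ball_inter_fixed_centers_invariant (F : M -> R -> Prop) (x : M) :
  (forall c r, F c r -> T c = c) -> ball_inter d F x -> ball_inter d F (T x).
Proof.
  intros Fix_F Fx c r Fc. unfold cball. rewrite <- (Fix_F c r Fc).
  eapply Rle_trans; [apply T_orbit_nonexpansive |].
  apply Dist_le; [exists c; left; reflexivity |].
  intros a Ha. rewrite (orbit_fixed M T c (Fix_F c r Fc) a Ha).
  exact (Fx c r Fc).
Qed.

End FixedPoint.

Theorem corollary3p6 (M : Type) (d : M -> M -> R) (T : M -> M) :
  inhabited M ->
  is_metric d ->
  bounded_metric d ->
  metric_normal_structure d ->
  admissible_compact d ->
  orbit_nonexpansive d T ->
  (exists x, Fix T x) /\ one_local_retract d (Fix T).
Proof.
  intros [m] [_ [_ [d_sym _]]] [B d_le_B] normal compact T_ne.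
  pose proof (invariant_admissible_fixed_point M d T B d_sym d_le_B normal compact T_ne)
    as fixed_point.
  split.
  - destruct (fixed_point setT) as [x _ Tx].
    + split; [exists m; exact I | split; [apply admissible_setT | auto]].
    + exists x. exact Tx.
  - intros F Fix_F [x Fx].
    destruct (fixed_point (ball_inter d F)) as [y Fy Ty].
    + split; [exists x; exact Fx | split].
      * apply admissible_ball_inter.
      * intros z. exact (ball_inter_fixed_centers_invariant M d T T_ne F z Fix_F).
    + exists y. split; assumption.
Qed.
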